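(* Let $\beta=\langle\beta_1,\beta_*,a\mapsto\tau_a\rangle:Y\to FY$ be an $F$-coalgebra in $\mathbf{Meas}$ (so $\beta_1,\beta_*:Y\to\mathbb I$ and $\tau_a:Y\to Y$ are measurable). The following are equivalent: (i) there exists an $F$-coalgebra morphism $[\![-]\!]$ from $(Y,\beta)$ to $(\mathbb DA^\infty,\Pi)$, i.e. a measurable map $[\![-]\!]:Y\to\mathbb DA^\infty$ with $\Pi\circ[\![-]\!]=F[\![-]\!]\circ\beta$; (ii) for all $y\in Y$, $\beta_1(y)=\beta_*(y)+\sum_{a\in A}\beta_1(\tau_a(y))$. Moreover, in this case the morphism in (i) is unique.
   Context: Work in $\mathbf{Meas}$. $\mathbb I=[0,1]$ with Borel $\sigma$-algebra; $A$ finite alphabet; $A^\infty=A^*\cup A^\omega$ (finite and infinite words, empty word $\varepsilon$) with $\sigma$-algebra $\Sigma_{A^\infty}$ generated by $S_\infty=\{\emptyset\}\cup\{\{w\}\mid w\in A^*\}\cup\{wA^\infty\mid w\in A^*\}$, where $wS=\{wv\mid v\in S\}$. $\mathbb DA^\infty$ is the set of sub-probability measures on $A^\infty$ with the $\sigma$-algebra generated by the maps $m\mapsto m(S)$, $S\in\Sigma_{A^\infty}$. The measure derivative of $m$ w.r.t. $a\in A$ is $m_a(S)=m(aS)$. $F$ is the functor $FX=\mathbb I\times\mathbb I\times X^A$ (product $\sigma$-algebra), $Ff=\mathrm{id}_{\mathbb I}\times\mathrm{id}_{\mathbb I}\times f^A$. $\Pi:\mathbb DA^\infty\to F\mathbb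 DA^\infty$ is $\Pi(m)=\langle m(A^\infty),\ m(\{\varepsilon\}),\ a\mapsto m_a\rangle$. *)

From Stdlib Require Import Reals List.
Open Scope R_scope.
Set Implicit Arguments.

Inductive generated (T : Type) (G : (T -> Prop) -> Prop) : (T -> Prop) -> Prop :=
| gen_base : forall S, G S -> generated G S
| gen_empty : generated G (fun _ => False)
| gen_compl : forall S, generated G S -> generated G (fun x => ~ S x)
| gen_union : forall F : nat -> T -> Prop,
    (forall n, generated G (F n)) -> generated G (fun x => exists n, F n x)
| gen_ext : forall S S', generated G S -> (forall x, S x <-> S' x) -> generated G S'.

Definition sigma_algebra (T : Type) (M : (T -> Prop) -> Prop) : Prop :=
  M (fun _ => False)
  /\ (forall S, M S -> M (fun x => ~ S x))
  /\ (forall F : nat -> T -> Prop, (forall n, M (F n)) -> M (fun x => exists n, F n x))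
  /\ (forall S S', M S -> (forall x, S x <-> S' x) -> M S').

Definition measurable_fun (X Z : Type) (MX : (X -> Prop) -> Prop)
  (MZ : (Z -> Prop) -> Prop) (f : X -> Z) : Prop :=
  forall B, MZ B -> MX (fun x => B (f x)).

(** Borel sigma-algebra on R (the Borel sets of I=[0,1] are its traces). *)
Definition borel : (R -> Prop) -> Prop :=
  generated (fun B => exists a : R, forall x, B x <-> x <= a).

Definition word (A : Type) : Type := (list A + (nat -> A))%type.

Definition weq (A : Type) (u v : word A) : Prop :=
  match u, v with
  | inl l, inl l' => l = l'
  | inr f, inr g => forall n, f n = g n
  | _, _ => False
  end.

Definition app_word (A : Type) (w : list A) (v : word A) : word A :=
  match v with
  | inl l => inl (w ++ l)
  | inr f => inr (fun n => match nth_error w n with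
                           | Some a => a
                           | None => f (n - length w)%nat
                           end)
  end.

Definition prefix_set (A : Type) (w : list A) (S : word A -> Prop) : word A -> Prop :=
  fun u => exists v, S v /\ weq u (app_word w v).

Definition S_infty (A : Type) (S : word A -> Prop) : Prop :=
  (forall u, S u <-> False)
  \/ (exists w : list A, forall u, S u <-> weq u (inl w))
  \/ (exists w : list A, forall u, S u <-> prefix_set w (fun _ => True) u).

Definition meas_word (A : Type) : (word A -> Prop) -> Prop := generated (@S_infty A).

Record subprob (A : Type) := SubProb {
  msr :> (word A -> Prop) -> R;
  msr_nonneg : forall S, meas_word S -> 0 <= msr S;
  msr_empty : msr (fun _ => False) = 0;
  msr_sigma_add : forall F : nat -> word A -> Prop,
      (forall n, meas_word (F n)) ->
      (forall n m u, n <> m -> F n u -> F m u -> False) ->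
      Un_cv (fun N => sum_f_R0 (fun k => msr (F k)) N)
            (msr (fun u => exists n, F n u));
  msr_le1 : msr (fun _ => True) <= 1
}.

Definition meas_DA (A : Type) : (subprob A -> Prop) -> Prop :=
  generated (fun M => exists S B, meas_word S /\ borel B /\
                                  forall m : subprob A, M m <-> B (m S)).

Definition sumA (A : Type) (enumA : list A) (f : A -> R) : R :=
  fold_right (fun a acc => f a + acc) 0 enumA.

(** h : Y -> D A^oo is an F-coalgebra morphism from (Y, <b1, bs, tau>) to
    (D A^oo, Pi): h is measurable and Pi o h = F h o beta, i.e.
    h(y)(A^oo) = b1 y, h(y)({eps}) = bs y and (h y)_a = h (tau a y)
    (equality of measures = agreement on all measurable sets). *)
Definition coalg_morphism (A Y : Type) (SY : (Y -> Prop) -> Prop)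
  (b1 bs : Y -> R) (tau : A -> Y -> Y) (h : Y -> subprob A) : Prop :=
  measurable_fun SY (@meas_DA A) h
  /\ (forall y, h y (fun _ => True) = b1 y)
  /\ (forall y, h y (fun u => weq u (inl nil)) = bs y)
  /\ (forall y a S, meas_word S -> h y (prefix_set (a :: nil) S) = h (tau a y) S).

(* A coalgebra morphism h is pinned down on the pi-system generating the
   sigma-algebra of A^oo: h y {w} = bs (tau_w y) and h y (w A^oo) = b1 (tau_w y).
   Splitting A^oo = {eps} + sum_a a A^oo yields the balance equation, and
   Dynkin's pi-lambda theorem yields uniqueness.
   Conversely, under the balance equation [0, b1 y) is the disjoint union of
   [0, bs y) and of consecutive blocks of lengths b1 (tau_a y).  Reading
   x in [0, b1 y) as the word of the blocks it successively falls into (moving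
   to tau_a y and rebasing x at the start of the block each time) gives a map
   [decode y] under which singletons and cylinders pull back to intervals of
   exactly the prescribed lengths; the image of Lebesgue measure under it is
   the required h y, measurable in y by pi-lambda again. *)

From Pilot Require Import Defs.
From Stdlib Require Import Reals List Lra.
From HB Require Import structures.
From mathcomp Require Import all_boot all_order all_algebra all_classical all_reals.
From mathcomp Require Import Rstruct Rstruct_topology ereal topology normedtype sequences.
From mathcomp Require Import measure lebesgue_measure measurable_realfun.
Import Order.TTheory GRing.Theory Num.Theory.

Set Implicit Arguments.
Unset Strict Implicit.
Unset Printing Implicit Defensive.

Local Open Scope classical_set_scope.
Local Open Scope R_scope.

Section Words.
Variable A : Type.
Implicit Types (a b : A) (w : list A) (u v : word A) (S T : set (word A)).

Lemma weq_eq u v : weq u v <-> u = v.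
Proof.
case: u v => [l|f] [l'|g] /=; split=> //; try by [move=> ->|case].
- by move=> fg; congr inr; apply/funext.
- by case=> ->.
Qed.

Lemma app_word_nil v : app_word nil v = v.
Proof.
case: v => [l|f] //=; congr inr; apply/funext => n.
by rewrite Nat.sub_0_r; case: n.
Qed.

Lemma app_word1_inr a f :
  app_word [:: a] (inr f) = inr (fun n => if n is m.+1 then f m else a).
Proof. by congr inr; apply/funext => -[|n] //=; rewrite nth_error_nil Nat.sub_0_r. Qed.

Lemma app_word_cons a w v : app_word (a :: w) v = app_word [:: a] (app_word w v).
Proof.
case: v => [l|f] //=; congr inr; apply/funext => -[|n] //=.
by rewrite nth_error_nil Nat.sub_0_r.
Qed.

Lemma app_word1_inj a b u v : app_word [:: a] u = app_word [:: b] v -> a = b /\ u = v.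
Proof.
case: u v => [l|f] [l'|g] //.
- by case=> -> ->.
- rewrite !app_word1_inr => -[fg].
  have := congr1 (fun h => h 0%nat) fg => /= ->; split => //.
  by congr inr; apply/funext => n; have := congr1 (fun h => h n.+1) fg.
Qed.

Lemma app_word_cons_neq_nil a w v : app_word (a :: w) v <> inl nil.
Proof. by case: v. Qed.

Lemma word_nil_or_cons u : u = inl nil \/ exists a v, u = app_word [:: a] v.
Proof.
case: u => [[|a l]|f]; [by left|right; by exists a, (inl l)|right].
exists (f 0%nat), (inr (fun n => f n.+1)).
by rewrite app_word1_inr; congr inr; apply/funext => -[].
Qed.

Lemma prefix_setE w S : prefix_set w S = app_word w @` S.
Proof.
apply/funext => u; apply/propext; split.
- by case=> v [Sv /weq_eq ->]; exists v.
- by case=> v Sv <-; exists v; split => //; apply/weq_eq.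
Qed.

Definition cyl w : set (word A) := range (app_word w).

Lemma cyl_nil : cyl nil = setT.
Proof. by apply/seteqP; split => // u _; exists u => //; rewrite app_word_nil. Qed.

Lemma cyl_cons a w : cyl (a :: w) = app_word [:: a] @` cyl w.
Proof.
rewrite /cyl image_comp; congr image; apply/funext => v /=.
exact: app_word_cons.
Qed.

Lemma word1_cons a w : [set inl (a :: w)] = app_word [:: a] @` [set @inl _ (nat -> A) w].
Proof. by rewrite image_set1. Qed.

Lemma image_app_word1I a S T :
  app_word [:: a] @` (S `&` T) = app_word [:: a] @` S `&` app_word [:: a] @` T.
Proof.
apply/seteqP; split; first exact: sub_image_setI.
move=> _ [[v Sv <-] [v' Tv' /app_word1_inj [_ vv']]].
by exists v => //; split => //; rewrite -vv'.
Qed.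

Lemma image_app_word1_disj a b S T : a <> b ->
  app_word [:: a] @` S `&` app_word [:: b] @` T = set0.
Proof.
move=> ab; apply/seteqP; split => // _ [[v _ <-] [v' _ /app_word1_inj [ba _]]].
by apply: ab.
Qed.

Lemma cylI w w' : cyl w `&` cyl w' = set0 \/ cyl w `&` cyl w' = cyl w \/
  cyl w `&` cyl w' = cyl w'.
Proof.
elim: w w' => [|a w IH] [|b w'].
- by right; left; rewrite setIid.
- by right; right; rewrite cyl_nil setTI.
- by right; left; rewrite cyl_nil setIT.
- rewrite !cyl_cons; have [<-|ab] := pselect (a = b); last first.
    by left; exact: image_app_word1_disj.
  rewrite -image_app_word1I.
  by case: (IH w') => [->|[->|->]]; [left; rewrite image_set0|right; left|right; right].
Qed.

End Words.

Definition pairwise_disjoint T (F : nat -> set T) : Prop :=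
  forall n m u, n <> m -> F n u -> F m u -> False.

Lemma bigcup_exists T (F : nat -> set T) : (fun u => exists n, F n u) = \bigcup_n F n.
Proof. by apply/seteqP; split => [u [n Fnu]|u [n _ Fnu]]; exists n. Qed.

Section WordSigma.
Variable A : Type.
Implicit Types (a : A) (w : list A) (S T : set (word A)) (F : nat -> set (word A)).

Lemma S_inftyP S :
  S_infty S <-> S = set0 \/ (exists w, S = [set inl w]) \/ exists w, S = cyl w.
Proof.
split.
- case=> [E|[[w E]|[w E]]]; [left|right; left; exists w|right; right; exists w];
    apply/funext => u; apply/propext; rewrite E //.
  + exact: weq_eq.
  + by rewrite prefix_setE.
- case=> [->|[[w ->]|[w ->]]]; [by left|right; left|right; right]; exists w => u.
  + by rewrite weq_eq.
  + by rewrite prefix_setE.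
Qed.

Lemma S_infty_setI : setI_closed (@S_infty A).
Proof.
have word1I w T : S_infty ([set inl w] `&` T).
  by rewrite set1I; case: ifP => _; apply/S_inftyP; [right; left; exists w|left].
move=> S T /S_inftyP[->|[[w ->]|[w ->]]] HT; first by apply/S_inftyP; left; rewrite set0I.
  exact: word1I.
case/S_inftyP: HT => [->|[[w' ->]|[w' ->]]].
- by apply/S_inftyP; left; rewrite setI0.
- by rewrite setIC; exact: word1I.
- apply/S_inftyP; case: (cylI w w') => [->|[->|->]]; first by left.
  + by right; right; exists w.
  + by right; right; exists w'.
Qed.

Lemma meas_word_S_infty S : S_infty S -> meas_word S.
Proof. exact: gen_base. Qed.

Lemma meas_word_set1 w : meas_word [set inl w].
Proof. by apply/meas_word_S_infty/S_inftyP; right; left; exists w. Qed.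

Lemma meas_word_cyl w : meas_word (cyl w).
Proof. by apply/meas_word_S_infty/S_inftyP; right; right; exists w. Qed.

Lemma meas_word_set0 : meas_word (@set0 (word A)).
Proof. exact: gen_empty. Qed.

Lemma meas_word_setT : meas_word (@setT (word A)).
Proof. rewrite -cyl_nil; exact: meas_word_cyl. Qed.

Lemma meas_word_setC S : meas_word S -> meas_word (~` S).
Proof. exact: gen_compl. Qed.

Lemma meas_word_bigcup F : (forall n, meas_word (F n)) -> meas_word (\bigcup_n F n).
Proof. by rewrite -bigcup_exists; exact: gen_union. Qed.

Lemma meas_word_setU S T : meas_word S -> meas_word T -> meas_word (S `|` T).
Proof.
move=> mS mT; rewrite -bigcup2E.
by apply: meas_word_bigcup => -[|[|n]] //; exact: meas_word_set0.
Qed.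

Lemma meas_word_setI S T : meas_word S -> meas_word T -> meas_word (S `&` T).
Proof.
move=> mS mT; rewrite -[S `&` T]setCK setCI.
by apply/meas_word_setC/meas_word_setU; apply: meas_word_setC.
Qed.

Lemma meas_word_image_app_word1 a S : meas_word S -> meas_word (app_word [:: a] @` S).
Proof.
elim=> {S} [S /S_inftyP[->|[[w ->]|[w ->]]]| |S _ IH|F _ IH|S S' _ IH SS'].
- by rewrite image_set0; exact: meas_word_set0.
- by rewrite image_set1; exact: meas_word_set1.
- by rewrite -cyl_cons; exact: meas_word_cyl.
- by rewrite -[fun _ : word A => False]/set0 image_set0; exact: meas_word_set0.
- have -> : app_word [:: a] @` (~` S) = cyl [:: a] `\` app_word [:: a] @` S.
    apply/seteqP; split => [_ [v Sv <-]|_ [[v _ <-] nSv]].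
    + split; first by exists v.
      by case=> v' Sv' /(@app_word1_inj _ a a)[_ v'v]; apply: Sv; rewrite -v'v.
    + by exists v => // Sv; apply: nSv; exists v.
  by apply: meas_word_setI; [exact: meas_word_cyl|exact: meas_word_setC].
- by rewrite bigcup_exists image_bigcup; exact: meas_word_bigcup.
- by have <- : S = S' by apply/funext => u; apply/propext.
Qed.

Lemma meas_word_lambda_ind (H : set (set (word A))) :
  (forall S, S_infty S -> H S) -> (forall S, H S -> H (~` S)) ->
  (forall F, pairwise_disjoint F -> (forall n, H (F n)) -> H (\bigcup_n F n)) ->
  forall S, meas_word S -> H S.
Proof.
move=> HG HC HU S mS; have GH : <<s setT, @S_infty A >> `<=` H.
  apply: lambda_system_subset => //; first exact: S_infty_setI.
  apply/dynkin_lambda_system; split => //.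
  - by apply: HG; apply/S_inftyP; right; right; exists nil; rewrite cyl_nil.
  - move=> F tF HF; apply: HU => // n m u nm Fnu Fmu.
    by apply: nm; apply: tF => //; exists u.
apply: GH; elim: mS => {S} [S GS| |S _ IH|F _ IH|S S' _ IH SS'].
- exact: sub_sigma_algebra.
- exact: sigma_algebra0.
- by have := sigma_algebraCD IH; rewrite setTD.
- by rewrite bigcup_exists; exact: sigma_algebra_bigcup.
- by have <- : S = S' by apply/funext => u; apply/propext.
Qed.

Definition countably_additive (mu : set (word A) -> R) : Prop :=
  mu set0 = 0 /\ forall F, (forall n, meas_word (F n)) -> pairwise_disjoint F ->
    Un_cv (fun N => sum_f_R0 (fun k => mu (F k)) N) (mu (\bigcup_n F n)).

Lemma subprob_countably_additive (m : subprob A) : countably_additive m.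
Proof. by split=> [|F mF dF]; [exact: msr_empty|rewrite -bigcup_exists; exact: msr_sigma_add]. Qed.

Lemma countably_additive_Un_cv mu F : countably_additive mu ->
  (forall n, meas_word (F n)) -> pairwise_disjoint F ->
  Un_cv (fun N => sum_f_R0 (fun k => mu (F k)) N) (mu (fun u => exists n, F n u)).
Proof. by move=> mu_ca; rewrite bigcup_exists; exact: mu_ca.2. Qed.

Lemma countably_additive_setU mu S T : countably_additive mu ->
  meas_word S -> meas_word T -> S `&` T = set0 -> mu (S `|` T) = mu S + mu T.
Proof.
move=> [mu0 muF] mS mT ST0; have := muF (bigcup2 S T).
rewrite bigcup2E => /(_ _ _)/UL_sequence; apply.
- by case=> [|[|n]] //; exact: meas_word_set0.
- move=> [|[|n]] [|[|m]] u // nm Fnu Fmu; try by [].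
  + by rewrite -[False]/(set0 u) -ST0.
  + by rewrite -[False]/(set0 u) -ST0.
- move=> e e0; exists 1%nat => -[/Nat.nle_succ_0 []|n _].
  rewrite (_ : sum_f_R0 _ n.+1 = mu S + mu T) ?/R_dist ?Rminus_diag ?Rabs_R0 //.
  by elim: n => [//|n IH]; rewrite tech5 IH /bigcup2 /= mu0 Rplus_0_r.
Qed.

Lemma countably_additive_setC mu S : countably_additive mu -> meas_word S ->
  mu (~` S) = mu setT - mu S.
Proof.
move=> mu_ca mS; rewrite -(setUCr S) countably_additive_setU ?setICr //.
- by rewrite Rplus_comm /Rminus Rplus_assoc Rplus_opp_r Rplus_0_r.
- exact: meas_word_setC.
Qed.

Lemma countably_additive_eq mu1 mu2 :
  countably_additive mu1 -> countably_additive mu2 ->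
  (forall S, S_infty S -> mu1 S = mu2 S) -> forall S, meas_word S -> mu1 S = mu2 S.
Proof.
move=> ca1 ca2 eqG S mS.
suff [] : meas_word S /\ mu1 S = mu2 S by [].
have eqT : mu1 setT = mu2 setT.
  by apply: eqG; apply/S_inftyP; right; right; exists nil; rewrite cyl_nil.
move: S mS; apply: meas_word_lambda_ind.
- by move=> S GS; split; [exact: meas_word_S_infty|exact: eqG].
- move=> S [mS eqS]; split; first exact: meas_word_setC.
  by rewrite !countably_additive_setC // eqS eqT.
- move=> F dF HF; split; first by apply: meas_word_bigcup => n; case: (HF n).
  apply: UL_sequence (ca1.2 F _ dF) _; first by move=> n; case: (HF n).
  have -> : (fun k => mu1 (F k)) = (fun k => mu2 (F k)) by apply/funext => k; case: (HF k).
  by apply: ca2.2 dF => n; case: (HF n).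
Qed.

Lemma countably_additive_image_app_word1 mu a : countably_additive mu ->
  countably_additive (fun S => mu (app_word [:: a] @` S)).
Proof.
move=> [mu0 muF]; split=> [|F mF dF]; first by rewrite image_set0.
rewrite image_bigcup; apply: muF => [n|n m _ nm [v Fnv <-] [v' Fmv']].
  exact: meas_word_image_app_word1.
by case/(@app_word1_inj _ a a) => _ v'v; apply: (dF n m v nm Fnv); rewrite -v'v.
Qed.

Fixpoint letter_cyls (l : list A) : set (word A) :=
  if l is a :: l' then cyl [:: a] `|` letter_cyls l' else set0.

Lemma letter_cylsP l u : letter_cyls l u <-> exists2 a, In a l & cyl [:: a] u.
Proof.
elim: l => [|a l IH] /=; first by split=> // -[].
split=> [[au|/IH[b lb bu]]|[b [<-|lb] bu]].
- by exists a; [left|].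
- by exists b; [right|].
- by left.
- by right; apply/IH; exists b.
Qed.

Lemma meas_word_letter_cyls l : meas_word (letter_cyls l).
Proof.
elim: l => [|a l IH]; first exact: meas_word_set0.
by apply: meas_word_setU => //; exact: meas_word_cyl.
Qed.

Lemma countably_additive_letter_cyls mu l : countably_additive mu -> NoDup l ->
  mu (letter_cyls l) = sumA l (fun a => mu (cyl [:: a])).
Proof.
move=> mu_ca; elim: l => [|a l IH] nd /=; first exact: mu_ca.1.
case/NoDup_cons_iff: nd => al nd.
rewrite countably_additive_setU ?IH //; [exact: meas_word_cyl|exact: meas_word_letter_cyls|].
apply/seteqP; split=> // u [[v _ <-] /letter_cylsP[b lb [v' _]]].
by rewrite /= => /(@app_word1_inj _ b a)[ba _]; apply: al; rewrite -ba.
Qed.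

Lemma word_setT_decomp (enumA : list A) : (forall a, In a enumA) ->
  setT = [set inl nil] `|` letter_cyls enumA.
Proof.
move=> full; apply/seteqP; split=> // u _.
case: (word_nil_or_cons u) => [->|[a [v ->]]]; first by left.
by right; apply/letter_cylsP; exists a => //; exists v.
Qed.

Lemma word1_nil_letter_cyls_disj l : [set inl nil] `&` letter_cyls l = set0.
Proof.
apply/seteqP; split=> // u [-> /letter_cylsP[a _ [v _]]].
exact: app_word_cons_neq_nil.
Qed.

End WordSigma.

Section CoalgebraMorphism.
Variables (A Y : Type) (SY : set (set Y)) (b1 bs : Y -> R) (tau : A -> Y -> Y).

Fixpoint tau_word (w : list A) (y : Y) : Y :=
  if w is a :: w' then tau_word w' (tau a y) else y.

Section Values.
Variable h : Y -> subprob A.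
Hypothesis h_morph : coalg_morphism SY b1 bs tau h.

Lemma coalg_morphism_cyl w y : h y (cyl w) = b1 (tau_word w y).
Proof.
case: h_morph => _ [h1 [_ h_tau]].
elim: w y => [|a w IH] y /=; first by rewrite cyl_nil h1.
by rewrite cyl_cons -prefix_setE h_tau ?IH //; exact: meas_word_cyl.
Qed.

Lemma coalg_morphism_set1 w y : h y [set inl w] = bs (tau_word w y).
Proof.
case: h_morph => _ [_ [hs h_tau]].
elim: w y => [|a w IH] y /=.
  rewrite -hs (_ : [set inl nil] = fun u => weq u (inl nil)) //.
  by apply/funext => u; apply/propext; rewrite weq_eq.
by rewrite word1_cons -prefix_setE h_tau ?IH //; exact: meas_word_set1.
Qed.

Lemma coalg_morphism_balance (enumA : list A) : NoDup enumA -> (forall a, In a enumA) ->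
  forall y, b1 y = bs y + sumA enumA (fun a => b1 (tau a y)).
Proof.
move=> nd full y; have h_ca := subprob_countably_additive (h y).
rewrite -[b1 y]/(b1 (tau_word nil y)) -coalg_morphism_cyl cyl_nil (word_setT_decomp full).
rewrite countably_additive_setU ?word1_nil_letter_cyls_disj //; last first.
- exact: meas_word_letter_cyls.
- exact: meas_word_set1.
rewrite countably_additive_letter_cyls // coalg_morphism_set1; congr (_ + sumA _ _).
by apply/funext => a; rewrite coalg_morphism_cyl.
Qed.

End Values.

Lemma coalg_morphism_unique (h1 h2 : Y -> subprob A) :
  coalg_morphism SY b1 bs tau h1 -> coalg_morphism SY b1 bs tau h2 ->
  forall y S, meas_word S -> h1 y S = h2 y S.
Proof.
move=> h1m h2m y; apply: countably_additive_eq; try exact: subprob_countably_additive.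
move=> S /S_inftyP[->|[[w ->]|[w ->]]].
- by rewrite !msr_empty.
- by rewrite !coalg_morphism_set1.
- by rewrite !coalg_morphism_cyl.
Qed.

End CoalgebraMorphism.

Section IntervalPartition.
Variables (A : Type) (f : A -> R).
Hypothesis f_ge0 : forall a, 0 <= f a.

Fixpoint offset (l : list A) (a : A) : R :=
  if l is b :: l' then
    match pselect (b = a) with left _ => 0 | right _ => f b + offset l' a end
  else 0.

Lemma sumA_ge0 l : 0 <= sumA l f.
Proof. by elim: l => [|a l IH] /=; [exact: Rle_refl|have := f_ge0 a; lra]. Qed.

Lemma offset_ge0 l a : 0 <= offset l a.
Proof.
elim: l => [|b l IH] /=; first exact: Rle_refl.
by case: pselect => _; [exact: Rle_refl|have := f_ge0 b; lra].
Qed.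

Lemma offset_add_le l a : In a l -> offset l a + f a <= sumA l f.
Proof.
elim: l => [//|b l IH] /= al; have := sumA_ge0 l.
case: pselect => [<-|ba]; first lra.
by case: al => [/ba //|/IH]; lra.
Qed.

Lemma offset_inj l a b x : In a l -> In b l ->
  offset l a <= x < offset l a + f a -> offset l b <= x < offset l b + f b -> a = b.
Proof.
elim: l x => [//|c l IH] x /= al bl.
have := offset_ge0 l a; have := offset_ge0 l b.
case: pselect => [<-|ca]; case: pselect => [<-|cb] //; try lra.
case: al => [/ca //|al]; case: bl => [/cb //|bl] _ _ ax bx.
by apply: (IH (x - f c)) => //; lra.
Qed.

Lemma offset_cover l x : NoDup l -> 0 <= x < sumA l f ->
  exists2 a, In a l & offset l a <= x < offset l a + f a.
Proof.
elim: l x => [|c l IH] x /=; first lra.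
case/NoDup_cons_iff => cl nd x_bd.
have [xc|cx] := Rlt_le_dec x (f c).
  by exists c; [left|case: pselect => // _; lra].
have [|a al ax] := IH (x - f c) nd; first lra.
exists a; [by right|case: pselect => [ca|_]; last lra].
by case: cl; rewrite ca.
Qed.

End IntervalPartition.

Section StreamWords.
Variable A : Type.
Implicit Type s : nat -> option A.

Fixpoint stream_take (n : nat) s : list A :=
  if n is n'.+1 then
    (if s 0%nat is Some a then a :: stream_take n' (fun k => s k.+1) else nil)
  else nil.

(* The letters of [s] up to its first [None]; the fallback [inl nil] and the
   default letter [a] are never used. *)
Definition word_of_stream s : word A :=
  match pselect (exists n, s n = None) with
  | left ex => inl (stream_take (sval (cid ex)) s)
  | right _ => if s 0%nat is Some a then inr (fun n => odflt a (s n)) else inl nil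
  end.

Lemma stream_take_stable n m s : (n <= m)%N -> s n = None ->
  stream_take m s = stream_take n s.
Proof.
elim: n m s => [|n IH] [|m] s //= nm sn; first by rewrite sn.
by case: (s 0%nat) => // a; congr cons; exact: IH.
Qed.

Lemma word_of_stream_None s : s 0%nat = None -> word_of_stream s = inl nil.
Proof.
move=> s0; rewrite /word_of_stream; case: pselect => [ex|[]]; last by exists 0%nat.
by case: (cid ex) => -[|n] _ //=; rewrite s0.
Qed.

Lemma word_of_stream_Some s a : s 0%nat = Some a ->
  word_of_stream s = app_word [:: a] (word_of_stream (fun n => s n.+1)).
Proof.
move=> s0; rewrite /word_of_stream.
case: (pselect (exists n, s n = None)) => [ex|nex]; case: pselect => [ex'|nex'].
- case: (cid ex) => -[|n] sn /=; first by rewrite s0 in sn.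
  case: (cid ex') => m sm /=; rewrite s0; congr (inl (a :: _)).
  by case/orP: (leq_total n m) => [nm|mn]; [rewrite (stream_take_stable nm sn)|
    rewrite (stream_take_stable mn sm)].
- by exfalso; case: ex => -[|n] sn; [rewrite s0 in sn|case: nex'; exists n].
- by exfalso; case: ex' => n sn; case: nex; exists n.+1.
- rewrite s0 /=; case s1: (s 1%nat) => [c|]; last by case: nex; exists 1%nat.
  rewrite app_word1_inr; congr inr; apply/funext => -[|n] /=; first by rewrite s0.
  by case sn: (s n.+1) => //; case: nex; exists n.+1.
Qed.

End StreamWords.

Section Decoding.
Variables (A Y : Type) (enumA : list A) (b1 bs : Y -> R) (tau : A -> Y -> Y).
Hypothesis b1_ge0 : forall y, 0 <= b1 y.
Hypothesis bs_ge0 : forall y, 0 <= bs y.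
Hypothesis enumA_uniq : NoDup enumA.
Hypothesis enumA_full : forall a, In a enumA.
Hypothesis balance : forall y, b1 y = bs y + sumA enumA (fun a => b1 (tau a y)).

(* [0, b1 y) is cut into [0, bs y) followed by the blocks
   [block_start a y, block_start a y + b1 (tau a y)), in the order of [enumA]. *)
Definition block_start (a : A) (y : Y) : R :=
  bs y + offset (fun b => b1 (tau b y)) enumA a.

Definition first_letter (y : Y) (x : R) : option A :=
  match pselect (exists a, block_start a y <= x < block_start a y + b1 (tau a y)) with
  | left ex => Some (sval (cid ex))
  | right _ => None
  end.

Lemma block_start_bounds a y :
  bs y <= block_start a y /\ block_start a y + b1 (tau a y) <= b1 y.
Proof.
have := offset_ge0 (fun b => b1_ge0 (tau b y)) enumA a.
have := offset_add_le (fun b => b1_ge0 (tau b y)) (enumA_full a).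
by rewrite /block_start [b1 y]balance; lra.
Qed.

Lemma first_letterP y x a :
  first_letter y x = Some a <-> block_start a y <= x < block_start a y + b1 (tau a y).
Proof.
rewrite /first_letter; case: pselect => [ex|nex]; last by split=> // xa; case: nex; exists a.
case: (cid ex) => b xb /=; split=> [[<-] //|xa]; congr Some.
apply: (offset_inj (fun c => b1_ge0 (tau c y)) (enumA_full b) (enumA_full a)
  (x := x - bs y)); rewrite /block_start in xa xb; lra.
Qed.

Lemma first_letter_None y x : 0 <= x < b1 y -> first_letter y x = None <-> x < bs y.
Proof.
move=> xy; split=> [lx|xs].
  have [//|sx] := Rlt_le_dec x (bs y).
  have [|a _ ax] := offset_cover (f := fun b => b1 (tau b y)) (x := x - bs y) enumA_uniq.
    by rewrite balance in xy; lra.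
  suff : first_letter y x = Some a by rewrite lx.
  by apply/first_letterP; rewrite /block_start; lra.
case E: (first_letter y x) => [a|] //; case/first_letterP: E => ax _.
by have := block_start_bounds a y; lra.
Qed.

Fixpoint nth_letter (n : nat) (y : Y) (x : R) : option A :=
  if first_letter y x is Some a then
    (if n is n'.+1 then nth_letter n' (tau a y) (x - block_start a y) else Some a)
  else None.

Definition decode (y : Y) (x : R) : word A := word_of_stream (fun n => nth_letter n y x).

Lemma decode_None y x : first_letter y x = None -> decode y x = inl nil.
Proof. by move=> lx; apply: word_of_stream_None; rewrite /= lx. Qed.

Lemma decode_Some y x a : first_letter y x = Some a ->
  decode y x = app_word [:: a] (decode (tau a y) (x - block_start a y)).
Proof.
move=> lx; rewrite /decode (@word_of_stream_Some _ _ a) /=; last by rewrite lx.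
by congr (app_word _ (word_of_stream _)); apply/funext => n /=; rewrite lx.
Qed.

Definition decode_pre (y : Y) (S : set (word A)) : set R :=
  [set x | 0 <= x < b1 y /\ S (decode y x)].

Lemma decode_pre_set0 y : decode_pre y set0 = set0.
Proof. by apply/seteqP; split=> x // [] []. Qed.

Lemma decode_pre_setC y S : decode_pre y (~` S) = decode_pre y setT `\` decode_pre y S.
Proof.
apply/seteqP; split=> x /=; first by move=> [xb ndx]; split=> // -[].
by move=> [[xb _] ndx]; split=> // dx; apply: ndx.
Qed.

Lemma decode_pre_bigcup y (F : nat -> set (word A)) :
  decode_pre y (\bigcup_n F n) = \bigcup_n decode_pre y (F n).
Proof.
apply/seteqP; split=> x /=; first by move=> [xb [n _ Fn]]; exists n.
by move=> [n _ [xb Fn]]; split=> //; exists n.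
Qed.

Lemma decode_pre_setT y : decode_pre y setT = [set x | 0 <= x < b1 y].
Proof. by apply/seteqP; split=> x /= [] //. Qed.

Lemma decode_pre_word1_nil y : decode_pre y [set inl nil] = [set x | 0 <= x < bs y].
Proof.
apply/seteqP; split=> x /=.
  move=> [xb]; case lx: (first_letter y x) => [a|] dx.
    by case: (@app_word_cons_neq_nil _ a nil (decode (tau a y) (x - block_start a y)));
      rewrite -dx (decode_Some lx).
  by split; [case: xb|exact: (first_letter_None xb).1].
move=> xs; have xb : 0 <= x < b1 y.
  by have := sumA_ge0 (fun a => b1_ge0 (tau a y)) enumA; rewrite balance; lra.
by split=> //; apply: decode_None; apply/(first_letter_None xb); case: xs.
Qed.

Lemma decode_pre_prefix y a S : decode_pre y (app_word [:: a] @` S) =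
  [set x | decode_pre (tau a y) S (x - block_start a y)].
Proof.
apply/seteqP; split=> x /=.
  move=> [xb [v Sv]]; case lx: (first_letter y x) => [b|].
    rewrite (decode_Some lx) => /(@app_word1_inj _ a b)[ab vE]; subst b.
    by move/first_letterP: lx => ax; split; [lra|rewrite -vE].
  by rewrite (decode_None lx) => /(@app_word_cons_neq_nil _ a nil).
move=> [xa dx]; have lx : first_letter y x = Some a by apply/first_letterP; lra.
have := block_start_bounds a y; have := bs_ge0 y => ??.
by split; [lra|rewrite (decode_Some lx); exists (decode (tau a y) (x - block_start a y))].
Qed.

Fixpoint word_start (w : list A) (y : Y) : R :=
  if w is a :: w' then block_start a y + word_start w' (tau a y) else 0.

Lemma decode_pre_word1 w y : decode_pre y [set inl w] =
  [set x | word_start w y <= x < word_start w y + bs (tau_word tau w y)].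
Proof.
elim: w y => [|a w IH] y /=; first by rewrite Rplus_0_l decode_pre_word1_nil.
by rewrite word1_cons decode_pre_prefix IH; apply/seteqP; split=> x /=; lra.
Qed.

Lemma decode_pre_cyl w y : decode_pre y (cyl w) =
  [set x | word_start w y <= x < word_start w y + b1 (tau_word tau w y)].
Proof.
elim: w y => [|a w IH] y /=; first by rewrite Rplus_0_l cyl_nil decode_pre_setT.
by rewrite cyl_cons decode_pre_prefix IH; apply/seteqP; split=> x /=; lra.
Qed.

End Decoding.

Lemma set_itv_co (a b : R) : [set x | a <= x < b] = `[a, b[%classic.
Proof.
apply/seteqP; split=> x /=; rewrite in_itv /=.
- by case=> /RleP -> /RltP.
- by case/andP => /RleP ? /RltP.
Qed.

Lemma Un_cv_cvgE (u : nat -> R) (l : R) : Un_cv u l <-> (u : nat -> R^o) @ \oo --> (l : R^o).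
Proof.
split=> [ul|/cvgrPdist_lt ul e /RltP e0].
- apply/cvgrPdist_lt => e /RltP e0; have [N uN] := ul e e0.
  by exists N => // n /= /ssrnat.leP Nn; rewrite distrC; apply/RltP; exact: uN.
- have [N _ uN] := ul e e0; exists N => n /ssrnat.leP Nn.
  by rewrite /R_dist; have := uN n Nn; rewrite distrC => /RltP.
Qed.

Lemma sum_f_R0E (u : nat -> R) N : sum_f_R0 u N = (\sum_(0 <= i < N.+1) u i)%R.
Proof. by elim: N => [|N IH]; rewrite ?big_nat1 // big_nat_recr //= IH. Qed.

Lemma lebesgue_measure_co (a b : R) : a <= b ->
  lebesgue_measure [set x | a <= x < b] = (b - a)%:E.
Proof.
move=> ab; rewrite set_itv_co lebesgue_measure_itv /=.
case: ifP => [_|/negbT]; first by rewrite -EFinB.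
rewrite lte_fin -leNgt => /RleP ba.
by rewrite (_ : b = a) ?subrr //; lra.
Qed.

Section DecodeMeasure.
Variables (A Y : Type) (enumA : list A) (b1 bs : Y -> R) (tau : A -> Y -> Y).
Hypothesis b1_ge0 : forall y, 0 <= b1 y.
Hypothesis bs_ge0 : forall y, 0 <= bs y.
Hypothesis enumA_uniq : NoDup enumA.
Hypothesis enumA_full : forall a, In a enumA.
Hypothesis balance : forall y, b1 y = bs y + sumA enumA (fun a => b1 (tau a y)).
Hypothesis b1_le1 : forall y, b1 y <= 1.

Local Notation pre := (decode_pre enumA b1 bs tau).

Lemma measurable_decode_pre y S : meas_word S ->
  measurable (pre y S : set (measurableTypeR R)).
Proof.
have mco a b : measurable ([set x | a <= x < b] : set (measurableTypeR R)).
  by rewrite set_itv_co; exact: measurable_itv.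
elim=> {S} [S /S_inftyP[->|[[w ->]|[w ->]]]| |S _ IH|F _ IH|S S' _ IH SS'].
- by rewrite decode_pre_set0.
- by rewrite decode_pre_word1.
- by rewrite decode_pre_cyl.
- by rewrite -[fun _ : word A => False]/set0 decode_pre_set0.
- by rewrite -[fun u => ~ S u]/(~` S) decode_pre_setC decode_pre_setT; exact: measurableD.
- by rewrite bigcup_exists decode_pre_bigcup; exact: bigcupT_measurable.
- by have <- : S = S' by apply/funext => u; apply/propext.
Qed.

Definition decode_measure (y : Y) (S : set (word A)) : R := fine (lebesgue_measure (pre y S)).

Lemma lebesgue_decode_pre_setT y : lebesgue_measure (pre y setT) = (b1 y)%:E.
Proof. by rewrite decode_pre_setT (lebesgue_measure_co (b1_ge0 y)) subr0. Qed.

Lemma lebesgue_decode_pre_le y S : meas_word S ->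
  (lebesgue_measure (pre y S) <= (b1 y)%:E)%E.
Proof.
move=> mS; rewrite -lebesgue_decode_pre_setT.
apply: le_measure; rewrite ?inE; [exact: measurable_decode_pre| |by move=> x []].
exact: (measurable_decode_pre y (@meas_word_setT A)).
Qed.

Lemma lebesgue_decode_pre y S : meas_word S ->
  lebesgue_measure (pre y S) = (decode_measure y S)%:E.
Proof.
move=> mS; rewrite fineK // ge0_fin_numE ?measure_ge0 //.
by rewrite (le_lt_trans (lebesgue_decode_pre_le y mS)) // ltry.
Qed.

Lemma decode_measure_bounds y S : meas_word S -> 0 <= decode_measure y S <= b1 y.
Proof.
move=> mS; split; apply/RleP; first exact/fine_ge0/measure_ge0.
by rewrite -lee_fin -lebesgue_decode_pre //; exact: lebesgue_decode_pre_le.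
Qed.

Lemma decode_measure_setT y : decode_measure y setT = b1 y.
Proof. by rewrite /decode_measure lebesgue_decode_pre_setT. Qed.

Lemma decode_measure_word1 w y : decode_measure y [set inl w] = bs (tau_word tau w y).
Proof.
rewrite /decode_measure decode_pre_word1 // lebesgue_measure_co /=.
  by rewrite addrC addKr.
by have := bs_ge0 (tau_word tau w y); lra.
Qed.

Lemma decode_measure_cyl w y : decode_measure y (cyl w) = b1 (tau_word tau w y).
Proof.
rewrite /decode_measure decode_pre_cyl // lebesgue_measure_co /=.
  by rewrite addrC addKr.
by have := b1_ge0 (tau_word tau w y); lra.
Qed.

Lemma decode_measure_countably_additive y : countably_additive (decode_measure y).
Proof.
split=> [|F mF dF]; first by rewrite /decode_measure decode_pre_set0 measure0.
have : (fun n => (\sum_(0 <= i < n) decode_measure y (F i))%:E) @ \oo -->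
    (decode_measure y (\bigcup_n F n))%:E.
  rewrite -lebesgue_decode_pre; last exact: meas_word_bigcup.
  have -> : (fun n => (\sum_(0 <= i < n) decode_measure y (F i))%:E) =
      (fun n => (\sum_(0 <= i < n) lebesgue_measure (pre y (F i)))%E).
    apply/funext => n; rewrite -sumEFin.
    by apply: eq_bigr => i _; rewrite lebesgue_decode_pre.
  rewrite decode_pre_bigcup; apply: measure_sigma_additive => [n|n m _ _ [x [[_ Fn] [_ Fm]]]].
    exact: measurable_decode_pre.
  by apply: contrapT => nm; exact: dF nm Fn Fm.
move/fine_cvg; rewrite -cvg_shiftS => /Un_cv_cvgE.
by apply: Un_cv_ext => N; rewrite sum_f_R0E.
Qed.

Lemma decode_measure_prefix y a S : meas_word S ->
  decode_measure y (app_word [:: a] @` S) = decode_measure (tau a y) S.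
Proof.
have ca := decode_measure_countably_additive.
apply: (countably_additive_eq (countably_additive_image_app_word1 a (ca y)) (ca (tau a y))).
move=> {}S /S_inftyP[->|[[w ->]|[w ->]]].
- by rewrite image_set0 (ca _).1 (ca _).1.
- by rewrite /= -word1_cons !decode_measure_word1.
- by rewrite /= -cyl_cons !decode_measure_cyl.
Qed.

Definition decode_subprob (y : Y) : subprob A :=
  @SubProb A (decode_measure y) (fun S mS => proj1 (decode_measure_bounds y mS))
    (decode_measure_countably_additive y).1
    (fun F => countably_additive_Un_cv (decode_measure_countably_additive y))
    (eq_ind_r (fun r => r <= 1) (b1_le1 y) (decode_measure_setT y)).

End DecodeMeasure.

Lemma borel_measurable (B : set R) : borel B -> measurable (B : set (measurableTypeR R)).
Proof.
elim=> {B} [B [a Ba]| |B _ IH|F _ IH|B B' _ IH BB'].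
- have -> : B = `]-oo, a]%classic.
    by apply/seteqP; split=> x; rewrite /= in_itv /= Ba => /RleP.
  exact: measurable_itv.
- exact: measurable0.
- exact: measurableC.
- by rewrite bigcup_exists; exact: bigcupT_measurable.
- by have <- : B = B' by apply/funext => x; apply/propext.
Qed.

Lemma sigma_algebra_setT (Y : Type) (SY : set (set Y)) :
  Defs.sigma_algebra SY -> sigma_algebra setT SY.
Proof.
case=> SY0 [SYC [SYU SYE]]; split=> // [S SYS|F SYF].
- by rewrite setTD; exact: SYC.
- by rewrite -bigcup_exists; exact: SYU.
Qed.

(* [g_sigma_algebraType] needs a pointed carrier. *)
Definition pointed_at (Y : Type) (y0 : Y) : Type := Y.
HB.instance Definition _ (Y : Type) (y0 : Y) := gen_eqMixin (pointed_at y0).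
HB.instance Definition _ (Y : Type) (y0 : Y) := gen_choiceMixin (pointed_at y0).
HB.instance Definition _ (Y : Type) (y0 : Y) := isPointed.Build (pointed_at y0) y0.

Section MeasurableReal.
Variables (Y : Type) (y0 : Y) (SY : set (set Y)).
Hypothesis SY_sigma : Defs.sigma_algebra SY.
Local Notation T := (@g_sigma_algebraType (pointed_at y0) SY).

Lemma measurable_funP (f : Y -> R) :
  Defs.measurable_fun SY borel f <-> measurable_fun setT (f : T -> measurableTypeR R).
Proof.
have mE : @measurable _ T = SY := sigma_algebra_id (sigma_algebra_setT SY_sigma).
split=> [mf|mf B /borel_measurable mB].
  2: by have := mf measurableT B mB; rewrite setTI mE.
apply: (measurability _ (RGenOInfty.measurableE R)) => _ [_ [a ->] <-].
rewrite mE; case: SY_sigma => _ [SYC [_ SYE]].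
have mle : SY (fun y => f y <= a).
  by apply: (mf (fun x => x <= a)); apply: gen_base; exists a.
apply: (SYE _ _ (SYC _ mle)) => y; rewrite /= in_itv /= andbT.
by split=> [/Rnot_le_lt/RltP|[_ /RltP ? ?]]; [|lra].
Qed.

End MeasurableReal.

Section MeasurableEvaluation.
Variables (A Y : Type) (SY : set (set Y)).
Hypothesis SY_sigma : Defs.sigma_algebra SY.

Lemma measurable_fun_cst (c : R) : Defs.measurable_fun SY borel (fun _ => c).
Proof.
move=> B _; case: SY_sigma => SY0 [SYC [_ SYE]].
case: (pselect (B c)) => Bc; last by apply: (SYE _ _ SY0).
by apply: (SYE _ _ (SYC _ SY0)) => y; split=> // _ [].
Qed.

Lemma measurable_eval (h : Y -> subprob A) :
  (forall w, Defs.measurable_fun SY borel (fun y => h y [set inl w])) ->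
  (forall w, Defs.measurable_fun SY borel (fun y => h y (cyl w))) ->
  forall S, meas_word S -> Defs.measurable_fun SY borel (fun y => h y S).
Proof.
move=> h1 hcyl; case: (pselect (inhabited Y)) => [[y0]|Y0]; last first.
  move=> S _ B _; case: SY_sigma => SY0 [_ [_ SYE]]; apply: (SYE _ _ SY0) => y.
  by split=> // _; apply: Y0.
pose T := @g_sigma_algebraType (pointed_at y0) SY.
have mP := measurable_funP y0 SY_sigma.
have hT : measurable_fun setT ((fun y => h y setT) : T -> measurableTypeR R).
  by apply/mP; rewrite -cyl_nil.
move=> S mS; apply/mP.
suff [] : meas_word S /\ measurable_fun setT ((fun y => h y S) : T -> measurableTypeR R) by [].
move: S mS; apply: meas_word_lambda_ind.
- move=> S GS; split; first exact: meas_word_S_infty.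
  apply/mP; case/S_inftyP: GS => [->|[[w ->]|[w ->]]] //.
  by under eq_fun => y do rewrite msr_empty; exact: measurable_fun_cst.
- move=> S [mS hS]; split; first exact: meas_word_setC.
  have -> : ((fun y => h y (~` S)) : T -> measurableTypeR R) =
      ((fun y => h y setT) \- (fun y => h y S))%R.
    apply/funext => y; rewrite countably_additive_setC //.
    exact: subprob_countably_additive.
  exact: measurable_funB.
- move=> F dF hF; split; first by apply: meas_word_bigcup => n; case: (hF n).
  pose g N (y : T) : measurableTypeR R := sum_f_R0 (fun k => h y (F k)) N.
  apply: (@measurable_fun_cvg _ _ _ setT g) => [N|y _].
    elim: N => [|N IH]; first by case: (hF 0%nat).
    by apply: measurable_funD => //; case: (hF N.+1).
  apply/Un_cv_cvgE; apply: (subprob_countably_additive (h y)).2 => // n.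
  by case: (hF n).
Qed.

Lemma measurable_into_DA (h : Y -> subprob A) :
  (forall S, meas_word S -> Defs.measurable_fun SY borel (fun y => h y S)) ->
  Defs.measurable_fun SY (@meas_DA A) h.
Proof.
case: SY_sigma => SY0 [SYC [SYU SYE]] hS M.
elim=> {M} [M [S [B [mS [mB MB]]]]| |M _ IH|F _ IH|M M' _ IH MM'].
- by apply: (SYE _ _ (hS S mS B mB)) => y; rewrite MB.
- exact: SY0.
- exact: SYC.
- exact: SYU.
- by apply: (SYE _ _ IH) => y; exact: MM'.
Qed.

End MeasurableEvaluation.

Section DecodeMorphism.
Variables (A Y : Type) (enumA : list A) (SY : set (set Y)).
Variables (b1 bs : Y -> R) (tau : A -> Y -> Y).
Hypothesis SY_sigma : Defs.sigma_algebra SY.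
Hypothesis b1_ge0 : forall y, 0 <= b1 y.
Hypothesis bs_ge0 : forall y, 0 <= bs y.
Hypothesis b1_le1 : forall y, b1 y <= 1.
Hypothesis enumA_uniq : NoDup enumA.
Hypothesis enumA_full : forall a, In a enumA.
Hypothesis balance : forall y, b1 y = bs y + sumA enumA (fun a => b1 (tau a y)).
Hypothesis b1_meas : Defs.measurable_fun SY borel b1.
Hypothesis bs_meas : Defs.measurable_fun SY borel bs.
Hypothesis tau_meas : forall a, Defs.measurable_fun SY SY (tau a).

Lemma measurable_tau_word w : Defs.measurable_fun SY SY (tau_word tau w).
Proof. by elim: w => [|a w IH] //= B /IH; exact: tau_meas. Qed.

Lemma decode_coalg_morphism :
  coalg_morphism SY b1 bs tau
    (decode_subprob b1_ge0 bs_ge0 enumA_uniq enumA_full balance b1_le1).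
Proof.
split; [|split; [|split]] => [|y|y|y a S mS] /=.
- apply: measurable_into_DA => //; apply: measurable_eval => // w /=.
  + by under eq_fun => y do rewrite decode_measure_word1 //; move=> B /bs_meas/measurable_tau_word.
  + by under eq_fun => y do rewrite decode_measure_cyl //; move=> B /b1_meas/measurable_tau_word.
- exact: decode_measure_setT.
- rewrite (_ : (fun u => weq u (inl nil)) = [set inl nil]); first exact: decode_measure_word1.
  by apply/funext => u; apply/propext; rewrite weq_eq.
- by rewrite prefix_setE; exact: decode_measure_prefix.
Qed.

End DecodeMorphism.

(* Back to [Defs.sigma_algebra] and [Defs.measurable_fun], shadowed by mathcomp. *)
Import Defs.

Theorem mainTheorem10
  (A : Type) (enumA : list A) (HnodupA : NoDup enumA) (HfullA : forall a : A, In a enumA)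
  (Y : Type) (SY : (Y -> Prop) -> Prop) (HSY : sigma_algebra SY)
  (b1 bs : Y -> R) (tau : A -> Y -> Y)
  (Hb1I : forall y, 0 <= b1 y <= 1) (HbsI : forall y, 0 <= bs y <= 1)
  (Hb1m : measurable_fun SY borel b1) (Hbsm : measurable_fun SY borel bs)
  (Htaum : forall a, measurable_fun SY SY (tau a)) :
  ((exists h : Y -> subprob A, coalg_morphism SY b1 bs tau h)
   <-> (forall y, b1 y = bs y + sumA enumA (fun a => b1 (tau a y))))
  /\ (forall h1 h2 : Y -> subprob A,
        coalg_morphism SY b1 bs tau h1 -> coalg_morphism SY b1 bs tau h2 ->
        forall y S, meas_word S -> h1 y S = h2 y S).
Proof.
split; [split|].
- by case=> h hm; apply: (coalg_morphism_balance hm).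
- move=> balance; have b1_ge0 y := (Hb1I y).1; have b1_le1 y := (Hb1I y).2.
  have bs_ge0 y := (HbsI y).1.
  by eexists; exact: (decode_coalg_morphism HSY b1_ge0 bs_ge0 b1_le1 HnodupA HfullA balance).
- exact: coalg_morphism_unique.
Qed.
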